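(* Consider one seller with one item and $n$ ex-interim rational buyers $N=\{1,\dots,n\}$; the item's quality $q\in Q=[q_1,q_2]$ has density $g$ and is observed only by the seller; buyer $i$'s valuation is $v_i(q)\ge0$. Let $\pi$ satisfy $\pi(q,s_i)\ge0$ for $i\in\{0,\dots,n\}$ and $\sum_{i\in N}\pi(q,s_i)+\pi(q,s_0)=1$ for all $q$, and let $p$ be such that for all $i\in N$: $\int_Q\pi(q,s_i)[v_i(q)-p]g(q)\,\mathrm{d}q\ge0$ and $\int_Q\pi(q,s_i)[v_i(q)-p]g(q)\,\mathrm{d}q\ge\mathbb{E}_q[v_i(q)]-p$. Then $Rev_{sig}(\pi,p)=p\int_Q\sum_{i\in N}\pi(q,s_i)g(q)\,\mathrm{d}q\le\mathbb{E}_q[v_{max}(q)]$, where $v_{max}(q)=\max_i v_i(q)$.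
   Context: Signal $s_i$ ($i\in N$) recommends buyer $i$ to buy and others not to buy; $s_0$ recommends no one to buy. The constraints express obedience of ex-interim rational buyers, who buy iff their posterior expected valuation is at least $p$. $\mathbb{E}_q$ is expectation under the prior density $g$. *)

From HB Require Import structures.
From mathcomp Require Import all_boot all_order all_algebra.
From mathcomp Require Import all_classical all_reals all_analysis.
Set Implicit Arguments. Unset Strict Implicit. Unset Printing Implicit Defensive.
Import Order.TTheory GRing.Theory Num.Theory.

From HB Require Import structures.
From mathcomp Require Import all_boot all_order all_algebra.
From mathcomp Require Import all_classical all_reals all_analysis.
From mathcomp Require Import measurable_realfun ring.
Set Implicit Arguments. Unset Strict Implicit. Unset Printing Implicit Defensive.
Import Order.TTheory GRing.Theory Num.Theory.
Local Open Scope classical_set_scope.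
Local Open Scope ring_scope.

(* Obedience of buyer i, 0 <= E[pi_i (v_i - p)], says that the revenue p E[pi_i]
   collected from buyer i is at most E[pi_i v_i].  Summing over the buyers,
   sum_i pi_i v_i <= v_max pointwise because the weights pi_i are nonnegative
   with sum at most 1 and v_max >= 0. *)

Section weighted_max.
Variables (R : realDomainType) (I : finType).

Lemma bigmaxr_le_sum (F : I -> R) : (forall i, 0 <= F i) ->
  \big[Num.max/0]_i F i <= \sum_i F i.
Proof.
move=> F0; apply: bigmax_le => [|i _]; first exact: sumr_ge0.
by rewrite (bigD1 i) //= lerDl sumr_ge0.
Qed.

Lemma subconvex_sum_le_bigmaxr (w F : I -> R) :
  (forall i, 0 <= w i) -> \sum_i w i <= 1 ->
  \sum_i w i * F i <= \big[Num.max/0]_i F i.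
Proof.
move=> w0 w1; set M := \big[Num.max/0]_i F i.
have M0 : 0 <= M by exact: bigmax_ge_id.
apply: (le_trans (y := \sum_i w i * M)).
  by apply: ler_sum => i _; rewrite ler_wpM2l //; exact: le_bigmax.
by rewrite -mulr_suml -[leRHS]mul1r ler_wpM2r.
Qed.

End weighted_max.

Section real_integrals.
Context d (T : measurableType d) (R : realType).
Variables (mu : {measure set T -> \bar R}) (D : set T) (mD : measurable D).

Lemma measurable_fun_bigmaxr (I : Type) (s : seq I) (h : I -> T -> R) :
  (forall i, measurable_fun D (h i)) ->
  measurable_fun D (fun x => \big[Num.max/0]_(i <- s) h i x).
Proof.
move=> mh; elim: s => [|a t IH].
  by under eq_fun do rewrite big_nil; exact: measurable_cst.
by under eq_fun do rewrite big_cons; exact: measurable_maxr.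
Qed.

Lemma integrable_sumr (I : Type) (s : seq I) (h : I -> T -> R) :
  (forall i, mu.-integrable D (EFin \o h i)) ->
  mu.-integrable D (EFin \o (fun x => \sum_(i <- s) h i x)).
Proof.
move=> hi; apply: eq_integrable mD _ _ _ (integrable_sum mD s (fun i _ => hi i)).
by move=> x _ /=; rewrite sumEFin.
Qed.

Lemma Rintegral_sum (I : Type) (s : seq I) (h : I -> T -> R) :
  (forall i, mu.-integrable D (EFin \o h i)) ->
  Rintegral mu D (fun x => \sum_(i <- s) h i x)
  = \sum_(i <- s) Rintegral mu D (h i).
Proof.
move=> hi; elim: s => [|a t IH].
  by under eq_fun do rewrite big_nil; rewrite big_nil Rintegral_cst // mul0r.
under eq_fun do rewrite big_cons.
by rewrite big_cons RintegralD // ?IH //; exact: integrable_sumr.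
Qed.

Lemma ge0_lty_integrable (f : T -> R) :
  measurable_fun D f -> (forall x, D x -> 0 <= f x) ->
  (\int[mu]_(x in D) (f x)%:E < +oo)%E -> mu.-integrable D (EFin \o f).
Proof.
move=> mf f0 fty; apply/integrableP; split; first exact/measurable_EFinP.
by under eq_integral => x /[!inE] Dx do rewrite /= ger0_norm ?f0 //.
Qed.

Lemma integrable_mul_unit_bounded (w f : T -> R) :
  measurable_fun D w -> (forall x, D x -> 0 <= w x <= 1) ->
  mu.-integrable D (EFin \o f) -> mu.-integrable D (EFin \o (fun x => w x * f x)).
Proof.
move=> mw w01 fi; have mf := measurable_int mu fi.
apply: (le_integrable mD _ _ fi).
  by apply/measurable_EFinP; apply: measurable_funM => //; exact/measurable_EFinP.
move=> x Dx /=; rewrite lee_fin normrM.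
have /andP[w0 w1] := w01 x Dx.
by rewrite ger0_norm // -[leRHS]mul1r ler_wpM2r.
Qed.

Lemma integrable_bigmaxr_mul (I : finType) (h : I -> T -> R) (g : T -> R) :
  measurable_fun D g -> (forall i, measurable_fun D (h i)) ->
  (forall x, D x -> 0 <= g x) -> (forall i x, D x -> 0 <= h i x) ->
  (forall i, mu.-integrable D (EFin \o (fun x => h i x * g x))) ->
  mu.-integrable D (EFin \o (fun x => (\big[Num.max/0]_i h i x) * g x)).
Proof.
move=> mg mh g0 h0 hgi.
apply: (le_integrable mD _ _ (integrable_sumr (index_enum I) hgi)).
  apply/measurable_EFinP; apply: measurable_funM => //.
  exact: measurable_fun_bigmaxr.
move=> x Dx /=; have gx0 := g0 x Dx; have hx0 i : 0 <= h i x by exact: h0.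
rewrite lee_fin -mulr_suml !ger0_norm ?mulr_ge0 ?sumr_ge0 ?bigmax_ge_id //.
by apply: ler_wpM2r => //; exact: bigmaxr_le_sum.
Qed.

Lemma obedience_revenue_le (w v g : T -> R) (p : R) :
  mu.-integrable D (EFin \o (fun x => w x * g x)) ->
  mu.-integrable D (EFin \o (fun x => w x * v x * g x)) ->
  0 <= \int[mu]_(x in D) (w x * (v x - p) * g x) ->
  p * \int[mu]_(x in D) (w x * g x) <= \int[mu]_(x in D) (w x * v x * g x).
Proof.
move=> wgi wvgi obedient.
have pwgi : mu.-integrable D (EFin \o (fun x => p * (w x * g x))).
  apply: eq_integrable mD _ _ _ (integrableZl mD p wgi) => x _ /=.
  by rewrite EFinM.
rewrite -subr_ge0 -RintegralZl // -RintegralB //.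
suff -> : \int[mu]_(x in D) (w x * v x * g x - p * (w x * g x))
  = \int[mu]_(x in D) (w x * (v x - p) * g x) by [].
by apply: eq_Rintegral => x _; ring.
Qed.

End real_integrals.

(* Buyers are indexed by 'I_n; pi i q = pi(q, s_i), pi0 q = pi(q, s_0). *)
Theorem mainTheorem10 (R : realType) (n : nat) (q1 q2 : R) (g : R -> R)
  (v : 'I_n -> R -> R) (pi : 'I_n -> R -> R) (pi0 : R -> R) (p : R) :
  let Q := `[q1, q2]%classic in
  let mu := @lebesgue_measure R in
  measurable_fun Q g ->
  (forall q, Q q -> 0 <= g q) ->
  (\int[mu]_(q in Q) (g q)%:E = 1)%E ->
  (forall i, measurable_fun Q (v i)) ->
  (forall i q, Q q -> 0 <= v i q) ->
  (forall i, mu.-integrable Q (fun q => (v i q * g q)%:E)) ->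
  (forall i, measurable_fun Q (pi i)) ->
  measurable_fun Q pi0 ->
  (forall i q, Q q -> 0 <= pi i q) ->
  (forall q, Q q -> 0 <= pi0 q) ->
  (forall q, Q q -> \sum_(i < n) pi i q + pi0 q = 1) ->
  (forall i, 0 <= Rintegral mu Q (fun q => pi i q * (v i q - p) * g q)) ->
  (forall i, Rintegral mu Q (fun q => v i q * g q) - p
             <= Rintegral mu Q (fun q => pi i q * (v i q - p) * g q)) ->
  p * Rintegral mu Q (fun q => \sum_(i < n) pi i q * g q)
    <= Rintegral mu Q (fun q => (\big[Num.max/0]_(i < n) v i q) * g q).
Proof.
move=> Q mu mg g0 g1 mv v0 vgi mpi _ pi_ge0 pi0_ge0 pi_sum obedient _.
have mQ : measurable Q by exact: measurable_itv.
have gi : mu.-integrable Q (EFin \o g).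
  by apply: ge0_lty_integrable => //; rewrite g1 ltry.
have pi_sum_le1 q : Q q -> \sum_(i < n) pi i q <= 1.
  by move=> Qq; rewrite -(pi_sum q Qq) lerDl pi0_ge0.
have pi01 i q : Q q -> 0 <= pi i q <= 1.
  move=> Qq; rewrite pi_ge0 //= (le_trans _ (pi_sum_le1 q Qq)) //.
  by rewrite (bigD1 i) //= lerDl sumr_ge0 // => j _; exact: pi_ge0.
have pigi i := integrable_mul_unit_bounded (mu := mu) mQ (mpi i) (pi01 i) gi.
have pivgi i : mu.-integrable Q (EFin \o (fun q => pi i q * v i q * g q)).
  have := integrable_mul_unit_bounded (mu := mu) (f := fun q => v i q * g q)
    mQ (mpi i) (pi01 i) (vgi i).
  apply: (eq_integrable (mu := mu) mQ).
  by move=> q _ /=; rewrite mulrA.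
rewrite (Rintegral_sum (mu := mu) mQ _ pigi) mulr_sumr.
apply: (le_trans (y := \sum_i Rintegral mu Q (fun q => pi i q * v i q * g q))).
  by apply: ler_sum => i _; exact: obedience_revenue_le.
rewrite -(Rintegral_sum (mu := mu) mQ _ pivgi); apply: le_Rintegral => //.
- exact: integrable_sumr.
- exact: integrable_bigmaxr_mul.
move=> q Qq; rewrite -mulr_suml ler_wpM2r ?g0 //.
apply: subconvex_sum_le_bigmaxr => [i|]; [exact: pi_ge0 | exact: pi_sum_le1].
Qed.
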